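(* Let $V=\{v_0,\dots,v_{L-1}\}$ be a set of $L\ge1$ boolean variables and let $n_0,\dots,n_t$ ($t\ge1$) be a sequence of nodes, node $n_j$ carrying a state $s_j:V\to\{0,1\}$. Let $n^c=n_t$ (child) with state $s^c=s_t$ and $n^p=n_k$ (parent) for some $k\in\{0,\dots,t-1\}$, and suppose the states of $n^p$ and $n^c$ differ in exactly $e$ variables. For a node $n=n_m$ in the sequence define $\alpha_{0:t}(n)=\frac{1}{t}\sum_{i\in\{0,\dots,t\},i\ne m}\delta(n,n_i)$ with $\delta(n_m,n_i)=\frac1L\sum_{l=0}^{L-1}\mathbf{1}_{s_m(v_l)\neq s_i(v_l)}$. Let $$\mu=\mu_{t-1}^{min}(n^c)=\min_{0\le l\le L-1}\frac{N_{t-1}^{v_l}(s^c)}{t},\qquad N_{t-1}^{v_l}(s^c)=|\{j\in\{0,\dots,t-1\}\mid s_j(v_l)=s^c(v_l)\}|.$$ Then $$\alpha_{0:t}(n^c)\le\alpha_{0:t}(n^p)+\frac{t-1}{t}\,\frac{e-2e\mu}{L}.$$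
   Context: $\delta$ is the normalized Hamming distance between node states; $\alpha_{0:t}(n)$ is the average normalized Hamming distance of a node of the sequence to all other nodes; $\mu_{t-1}^{min}(n^c)$ is the minimum, over all variables, of the fraction of the first $t$ nodes $n_0,\dots,n_{t-1}$ whose state agrees with the child's state on that variable. *)

From mathcomp Require Import all_boot all_order all_algebra.
Set Implicit Arguments. Unset Strict Implicit. Unset Printing Implicit Defensive.
Import Order.TTheory GRing.Theory Num.Theory.
Local Open Scope ring_scope.

(* A sequence of nodes n_0..n_t, node j having state s j : 'I_L -> bool
   (variable v_l is index l). *)

Definition delta (R : realFieldType) (L t : nat) (s : 'I_t.+1 -> 'I_L -> bool)
  (m i : 'I_t.+1) : R :=
  #|[set l : 'I_L | s m l != s i l]|%:R / L%:R.

Definition alpha (R : realFieldType) (L t : nat) (s : 'I_t.+1 -> 'I_L -> bool)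
  (m : 'I_t.+1) : R :=
  (\sum_(i < t.+1 | i != m) delta R s m i) / t%:R.

(* N_{t-1}^{v_l}(s^c) = #{ j in 0..t-1 | s_j(v_l) = s^c(v_l) }, child = n_t *)
Definition Ncount (L t : nat) (s : 'I_t.+1 -> 'I_L -> bool) (l : 'I_L) : nat :=
  #|[set j : 'I_t.+1 | (j < t)%N && (s j l == s ord_max l)]|.

(* mu_{t-1}^{min}(n^c) = min_l N_{t-1}^{v_l}(s^c) / t.  The nat minimum is
   taken with neutral element t, which is harmless since every N <= t. *)
Definition mu_min (R : realFieldType) (L t : nat) (s : 'I_t.+1 -> 'I_L -> bool) : R :=
  (\big[minn/t]_(l < L) Ncount s l)%:R / t%:R.

From mathcomp Require Import all_boot all_order all_algebra.
From mathcomp Require Import ring lra.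
Import Order.TTheory GRing.Theory Num.Theory.
Local Open Scope ring_scope.

(* Work with unnormalised Hamming distances d.  For boolean vectors,
   d(c,i) + 2 #{l | s_k(l) <> s_c(l) = s_i(l)} = d(k,i) + d(k,c)
   coordinatewise.  Summing over the t nodes i <> c and exchanging the
   double count gives the exact identity
   sum_{i<>c} d(c,i) + 2 sum_{l : s_k(l) <> s_c(l)} N^{v_l} + e
     = sum_{i<>k} d(k,i) + t e,
   and each of the e counts N^{v_l} is at least t mu.  Dividing by L t gives
   the claim, even with 2 e mu / L in place of (t-1)/t * 2 e mu / L. *)

Lemma card_set_nat_sum (T : finType) (P : pred T) :
  #|[set x | P x]| = (\sum_x P x)%N.
Proof.
rewrite -sum1_card big_mkcond; apply: eq_bigr => x _.
by rewrite inE; case: (P x).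
Qed.

Section Hamming.
Context {I : finType}.

Definition hamming (f g : I -> bool) : nat := #|[set l | f l != g l]|.

Lemma hammingE f g : hamming f g = (\sum_l (f l != g l))%N.
Proof. exact: card_set_nat_sum. Qed.

Lemma hammingxx f : hamming f f = 0%N.
Proof. by rewrite hammingE big1 // => l _; rewrite eqxx. Qed.

Lemma hamming_triangle_defect x y z :
  (hamming x z + 2 * #|[set l | (y l != x l) && (z l == x l)]|
   = hamming y z + hamming y x)%N.
Proof.
rewrite !hammingE card_set_nat_sum big_distrr -!big_split /=.
by apply: eq_bigr => l _; case: (x l); case: (y l); case: (z l).
Qed.

End Hamming.

Section TotalHamming.
Context {I J : finType} (s : J -> I -> bool).

Definition total_hamming x := (\sum_(i | i != x) hamming (s x) (s i))%N.

Lemma total_hammingD1 x y :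
  total_hamming x = (\sum_(i | i != y) hamming (s x) (s i) + hamming (s x) (s y))%N.
Proof.
have sum_split z : (\sum_i hamming (s x) (s i)
                    = hamming (s x) (s z) + \sum_(i | i != z) hamming (s x) (s i))%N.
  exact: bigD1.
by rewrite addnC -sum_split (sum_split x) hammingxx.
Qed.

Lemma total_hamming_exchange c k :
  (total_hamming c
   + 2 * \sum_(i | i != c) #|[set l | (s k l != s c l) && (s i l == s c l)]|
   + hamming (s k) (s c)
   = total_hamming k + #|J|.-1 * hamming (s k) (s c))%N.
Proof.
have -> : (#|J|.-1 * hamming (s k) (s c) = \sum_(i | i != c) hamming (s k) (s c))%N.
  by rewrite sum_nat_cond_const cardsE cardC1.
rewrite (total_hammingD1 k c) [RHS]addnAC; congr (_ + _)%N.
rewrite /total_hamming big_distrr -!big_split /=.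
by apply: eq_bigr => i _; exact: hamming_triangle_defect.
Qed.

End TotalHamming.

Lemma sum_card_exchange {I J : finType} (A : pred I) (B : pred J) (r : I -> J -> bool) :
  (\sum_(i | A i) #|[set j | B j && r i j]| = \sum_(j | B j) #|[set i | A i && r i j]|)%N.
Proof.
have cond_sum (T : finType) (P : pred T) F :
  (\sum_(x | P x) F x = \sum_x P x * F x)%N.
  by rewrite big_mkcond; apply: eq_bigr => x _; case: (P x); rewrite ?mul1n.
rewrite (cond_sum _ A) (cond_sum _ B).
under eq_bigr => i _ do rewrite card_set_nat_sum big_distrr.
rewrite exchange_big; apply: eq_bigr => j _.
rewrite card_set_nat_sum big_distrr; apply: eq_bigr => i _.
by case: (A i); case: (B j); case: (r i j).
Qed.

Lemma card_mul_bigmin_le_sum {I : finType} (P : pred I) (F : I -> nat) (x : nat) :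
  (#|[set i | P i]| * \big[minn/x]_i F i <= \sum_(i | P i) F i)%N.
Proof.
rewrite -sum_nat_cond_const; apply: leq_sum => i _.
by rewrite -minEnat -leEnat; exact: bigmin_le.
Qed.

Lemma normalized_exchange_bound (R : realFieldType) (a b e m t L : R) :
  0 < L -> 1 <= t -> 0 <= e -> 0 <= m ->
  a + 2 * (e * m) + e <= b + t * e ->
  a / L / t <= b / L / t + (t - 1) / t * ((e - 2 * e * (m / t)) / L).
Proof.
move=> L_gt0 t_ge1 e_ge0 m_ge0 ab_le.
have t_gt0 : 0 < t by apply: lt_le_trans t_ge1.
rewrite -subr_ge0.
have -> : b / L / t + (t - 1) / t * ((e - 2 * e * (m / t)) / L) - a / L / t
          = (b + t * e - (a + 2 * (e * m) + e) + 2 * (e * m) / t) / (L * t).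
  by field; rewrite !gt_eqF.
apply: divr_ge0; last by rewrite mulr_ge0 ?ltW.
apply: addr_ge0; first by rewrite subr_ge0.
by rewrite !(divr_ge0, mulr_ge0) // ltW.
Qed.

Section NodeSequence.
Variables (L t : nat) (s : 'I_t.+1 -> 'I_L -> bool).

Lemma alphaE (R : realFieldType) x :
  alpha R s x = (total_hamming s x)%:R / L%:R / t%:R.
Proof. by rewrite /alpha /delta -mulr_suml natr_sum. Qed.

Lemma NcountE l :
  Ncount s l = #|[set i | (i != ord_max) && (s i l == s ord_max l)]|.
Proof.
apply: eq_card => i; rewrite !inE -(inj_eq val_inj) /=.
by rewrite [(i < t)%N]ltn_neqAle -ltnS ltn_ord andbT.
Qed.

Lemma total_hamming_last k :
  (total_hamming s ord_max + 2 * \sum_(l | s k l != s ord_max l) Ncount s l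
   + hamming (s k) (s ord_max)
   = total_hamming s k + t * hamming (s k) (s ord_max))%N.
Proof.
under eq_bigr => l _ do rewrite NcountE.
rewrite -(sum_card_exchange (fun i => i != ord_max) _ (fun i l => s i l == s ord_max l)).
by rewrite total_hamming_exchange card_ord.
Qed.

End NodeSequence.

Theorem theorem5 (R : realFieldType) (L t : nat) (s : 'I_t.+1 -> 'I_L -> bool)
  (k : 'I_t.+1) (e : nat) :
  (1 <= L)%N -> (1 <= t)%N -> (k < t)%N ->
  e = #|[set l : 'I_L | s k l != s ord_max l]| ->
  alpha R s ord_max <=
    alpha R s k + (t%:R - 1) / t%:R * ((e%:R - 2 * e%:R * mu_min R s) / L%:R).
Proof.
move=> L_gt0 t_gt0 _ e_def.
have e_hamming : e = hamming (s k) (s ord_max) := e_def.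
set m := (\big[minn/t]_(l < L) Ncount s l)%N.
have count_bound : (total_hamming s ord_max + 2 * (e * m) + e
                    <= total_hamming s k + t * e)%N.
  rewrite e_hamming -total_hamming_last leq_add2r leq_add2l leq_mul2l /=.
  exact: card_mul_bigmin_le_sum.
rewrite !alphaE; apply: normalized_exchange_bound; rewrite ?ltr0n ?ler1n ?ler0n //.
move: count_bound; rewrite -(ler_nat R) !natrD !natrM -/m.
lra.
Qed.
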